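(* Let $\gamma$ be a smooth, convex closed curve in the Euclidean plane with curvature $\kappa>0$, which is a Gutkin curve with contact angle $\alpha$, and let $x(t),y(t)$ be the corresponding chord parameterizations, where $x,y$ denote arc-length coordinates on $\gamma$ and $'$ denotes $d/dt$. Then along this family of chords $\kappa(x(t))\,x'(t)=\kappa(y(t))\,y'(t)$; equivalently, if the parameter $t$ is chosen so that $x'(t)=a/\kappa(x(t))$ for a constant $a$, then also $y'(t)=a/\kappa(y(t))$, so that the values of this parameter at the two endpoints of each chord differ by a constant.
   Context: A smooth convex oriented closed curve $C$ in $\mathbb{E}^2$ is a Gutkin curve with contact angle $\alpha\in(0,\pi]$ if there are parameterizations $x(t),y(t)$ of $C$ with $x'(t),y'(t)>0$, $x(t)\neq y(t)$, such that for every $t$ the angle at $x(t)$ between the positively oriented tangent of $C$ and the chord direction towards $y(t)$, and the angle at $y(t)$ between the chord direction (from $x(t)$ towards $y(t)$) and the positively oriented tangent of $C$, both equal $\alpha$. *)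

From Stdlib Require Import Reals Lra.
From Coquelicot Require Import Coquelicot.
Open Scope R_scope.

(* A plane curve is given by its two coordinate functions g1 g2 : R -> R. *)

Definition smooth (f : R -> R) : Prop := forall (n : nat) (s : R), ex_derive_n f n s.

Definition unit_speed (g1 g2 : R -> R) : Prop :=
  forall s, (Derive g1 s) ^ 2 + (Derive g2 s) ^ 2 = 1.

Definition closed_simple (g1 g2 : R -> R) (L : R) : Prop :=
  0 < L /\
  (forall s, g1 (s + L) = g1 s /\ g2 (s + L) = g2 s) /\
  (forall s u, 0 <= s < L -> 0 <= u < L -> g1 s = g1 u -> g2 s = g2 u -> s = u).

Definition det2 (a1 a2 b1 b2 : R) : R := a1 * b2 - a2 * b1.

(* convexity: the whole curve lies on one side of each tangent line *)
Definition convex_curve (g1 g2 : R -> R) : Prop :=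
  forall s,
    (forall u, 0 <= det2 (Derive g1 s) (Derive g2 s) (g1 u - g1 s) (g2 u - g2 s)) \/
    (forall u, det2 (Derive g1 s) (Derive g2 s) (g1 u - g1 s) (g2 u - g2 s) <= 0).

(* signed curvature of an arc-length parameterized curve *)
Definition curvature (g1 g2 : R -> R) (s : R) : R :=
  Derive g1 s * Derive_n g2 2 s - Derive g2 s * Derive_n g1 2 s.

(* (unoriented) angle in [0, pi] between two nonzero plane vectors *)
Definition angle (a1 a2 b1 b2 : R) : R :=
  acos ((a1 * b1 + a2 * b2) / (sqrt (a1 ^ 2 + a2 ^ 2) * sqrt (b1 ^ 2 + b2 ^ 2))).

(* Gutkin curve with contact angle alpha, witnessed by the arc-length
   parameterizations x, y of the chord endpoints *)
Definition gutkin_chords (g1 g2 : R -> R) (alpha : R) (x y : R -> R) : Prop :=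
  (forall t, ex_derive x t /\ 0 < Derive x t) /\
  (forall t, ex_derive y t /\ 0 < Derive y t) /\
  (forall s, exists t, g1 (x t) = g1 s /\ g2 (x t) = g2 s) /\
  (forall s, exists t, g1 (y t) = g1 s /\ g2 (y t) = g2 s) /\
  (forall t,
     let p1 := g1 (x t) in let p2 := g2 (x t) in
     let q1 := g1 (y t) in let q2 := g2 (y t) in
     (p1, p2) <> (q1, q2) /\
     angle (Derive g1 (x t)) (Derive g2 (x t)) (q1 - p1) (q2 - p2) = alpha /\
     angle (q1 - p1) (q2 - p2) (Derive g1 (y t)) (Derive g2 (y t)) = alpha).

From Stdlib Require Import Reals Lra.
From Coquelicot Require Import Coquelicot.
Open Scope R_scope.

(* Positive curvature and convexity put the curve on the left of every
   tangent, so each chord makes the oriented angle alpha with the tangent at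
   x(t) and the tangent at y(t) makes the oriented angle alpha with the chord:
   the unit tangent at y(t) is the one at x(t) rotated by 2 alpha.
   Differentiating this identity in t, and using that the curvature is
   det(T, dT/ds) and that rotations preserve determinants, gives
   kappa(y) y' = kappa(x) x'. *)

Lemma is_derive_Derive_smooth (g : R -> R) (s : R) :
  smooth g -> is_derive (Derive g) s (Derive_n g 2 s).
Proof. intros Hg. apply (Derive_correct (Derive_n g 1)). exact (Hg 2%nat s). Qed.

Lemma is_derive_pos_right (f : R -> R) (s l : R) :
  is_derive f s l -> f s = 0 -> 0 < l ->
  exists d, 0 < d /\ forall v, s < v < s + d -> 0 < f v.
Proof.
  intros Hl Hfs Hl0.
  apply is_derive_Reals in Hl.
  destruct (Hl l Hl0) as [[d Hd0] Hd].
  exists d; split; [exact Hd0|]. intros v Hv.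
  specialize (Hd (v - s)). replace (s + (v - s)) with v in Hd by ring.
  rewrite Hfs in Hd.
  assert (Hslope : 0 < (f v - 0) / (v - s)).
  { apply Rabs_def2 in Hd as [_ Hd]; [lra|lra|simpl; rewrite Rabs_right; lra]. }
  replace (f v) with ((f v - 0) / (v - s) * (v - s)) by (field; lra).
  apply Rmult_lt_0_compat; lra.
Qed.

Lemma exists_pos_of_second_derivative (f f' : R -> R) (s l : R) :
  (forall v, is_derive f v (f' v)) -> f s = 0 -> f' s = 0 ->
  is_derive f' s l -> 0 < l -> exists v, 0 < f v.
Proof.
  intros Hf Hfs Hf's Hl Hl0.
  destruct (is_derive_pos_right f' s l Hl Hf's Hl0) as [d [Hd Hpos]].
  exists (s + d / 2).
  destruct (MVT_cor2 f f' s (s + d / 2)) as [c [Hmvt Hc]]; [lra| |].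
  - intros c _. apply is_derive_Reals, Hf.
  - assert (0 < f' c) by (apply Hpos; lra).
    rewrite Hfs in Hmvt. nra.
Qed.

(* On the wrong side, det2 (T s) (g u - g s) would vanish to second order at
   [u = s] with second derivative [curvature s > 0], hence be positive somewhere. *)
Lemma convex_curve_det_nonneg (g1 g2 : R -> R) :
  smooth g1 -> smooth g2 -> convex_curve g1 g2 ->
  (forall s, 0 < curvature g1 g2 s) ->
  forall s u, 0 <= det2 (Derive g1 s) (Derive g2 s) (g1 u - g1 s) (g2 u - g2 s).
Proof.
  intros S1 S2 Hconv Hk s.
  destruct (Hconv s) as [Hleft|Hright]; [exact Hleft|exfalso].
  destruct (exists_pos_of_second_derivative
     (fun u => det2 (Derive g1 s) (Derive g2 s) (g1 u - g1 s) (g2 u - g2 s))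
     (fun u => det2 (Derive g1 s) (Derive g2 s) (Derive g1 u) (Derive g2 u))
     s (curvature g1 g2 s)) as [u Hu]; unfold det2 in *.
  - intros v. auto_derive.
    + split; [apply (S2 1%nat)|split; [apply (S1 1%nat)|exact I]].
    + rewrite !Rmult_1_l. reflexivity.
  - ring.
  - ring.
  - exact (is_derive_minus _ _ s _ _
      (is_derive_scal _ _ _ _ (is_derive_Derive_smooth g2 s S2))
      (is_derive_scal _ _ _ _ (is_derive_Derive_smooth g1 s S1))).
  - apply Hk.
  - specialize (Hright u). lra.
Qed.

Lemma angle_cos_sin (a1 a2 b1 b2 : R) :
  0 < a1 ^ 2 + a2 ^ 2 -> 0 < b1 ^ 2 + b2 ^ 2 -> 0 <= det2 a1 a2 b1 b2 ->
  let r := sqrt (a1 ^ 2 + a2 ^ 2) * sqrt (b1 ^ 2 + b2 ^ 2) in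
  a1 * b1 + a2 * b2 = r * cos (angle a1 a2 b1 b2) /\
  det2 a1 a2 b1 b2 = r * sin (angle a1 a2 b1 b2).
Proof.
  intros Ha Hb Hdet r.
  assert (Hr : 0 < r) by (apply Rmult_lt_0_compat; apply sqrt_lt_R0; lra).
  assert (Hr2 : r ^ 2 = (a1 ^ 2 + a2 ^ 2) * (b1 ^ 2 + b2 ^ 2)).
  { unfold r. rewrite Rpow_mult_distr, !pow2_sqrt; lra. }
  assert (Hlagrange : (a1 * b1 + a2 * b2) ^ 2 + det2 a1 a2 b1 b2 ^ 2 = r ^ 2)
    by (rewrite Hr2; unfold det2; ring).
  set (v := (a1 * b1 + a2 * b2) / r).
  assert (Hdot : a1 * b1 + a2 * b2 = r * v) by (unfold v; field; lra).
  assert (Hv : -1 <= v <= 1).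
  { assert (Hv2 : r ^ 2 * v ^ 2 <= r ^ 2 * 1) by (rewrite Hdot in Hlagrange; nra).
    apply Rmult_le_reg_l in Hv2; [split; nra|nra]. }
  assert (Hcos : cos (angle a1 a2 b1 b2) = v) by (apply cos_acos, Hv).
  assert (Hsin : 0 <= sin (angle a1 a2 b1 b2))
    by (destruct (acos_bound v); apply sin_ge_0; assumption).
  assert (Hpyth := sin2_cos2 (angle a1 a2 b1 b2)). unfold Rsqr in Hpyth.
  rewrite Hcos in Hpyth |- *. split; [exact Hdot|].
  assert (Hsq : det2 a1 a2 b1 b2 ^ 2 = (r * sin (angle a1 a2 b1 b2)) ^ 2).
  { replace ((r * sin (angle a1 a2 b1 b2)) ^ 2)
      with (r ^ 2 * (sin (angle a1 a2 b1 b2) * sin (angle a1 a2 b1 b2))) by ring.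
    replace (sin (angle a1 a2 b1 b2) * sin (angle a1 a2 b1 b2)) with (1 - v * v) by lra.
    rewrite Hdot in Hlagrange.
    transitivity (r ^ 2 - (r * v) ^ 2); [lra|ring]. }
  apply Rsqr_inj; [exact Hdet|nra|rewrite !Rsqr_pow2; exact Hsq].
Qed.

Definition rotated_by (theta a1 a2 b1 b2 : R) : Prop :=
  b1 = cos theta * a1 - sin theta * a2 /\ b2 = sin theta * a1 + cos theta * a2.

Lemma rotated_twice (a1 a2 b1 b2 c1 c2 r theta : R) :
  0 < r -> a1 ^ 2 + a2 ^ 2 = 1 -> c1 ^ 2 + c2 ^ 2 = r ^ 2 ->
  a1 * c1 + a2 * c2 = r * cos theta -> det2 a1 a2 c1 c2 = r * sin theta ->
  c1 * b1 + c2 * b2 = r * cos theta -> det2 c1 c2 b1 b2 = r * sin theta ->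
  rotated_by (2 * theta) a1 a2 b1 b2.
Proof.
  unfold det2. intros Hr Ha Hc Hac Hdac Hcb Hdcb.
  (* a plane vector is recovered from its dot and cross products with a known vector *)
  assert (Ec1 : c1 * (a1 ^ 2 + a2 ^ 2) = (a1 * c1 + a2 * c2) * a1 - (a1 * c2 - a2 * c1) * a2)
    by ring.
  assert (Ec2 : c2 * (a1 ^ 2 + a2 ^ 2) = (a1 * c2 - a2 * c1) * a1 + (a1 * c1 + a2 * c2) * a2)
    by ring.
  assert (Eb1 : b1 * (c1 ^ 2 + c2 ^ 2) = (c1 * b1 + c2 * b2) * c1 - (c1 * b2 - c2 * b1) * c2)
    by ring.
  assert (Eb2 : b2 * (c1 ^ 2 + c2 ^ 2) = (c1 * b2 - c2 * b1) * c1 + (c1 * b1 + c2 * b2) * c2)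
    by ring.
  rewrite Ha, Hac, Hdac, Rmult_1_r in Ec1, Ec2.
  rewrite Hc, Hcb, Hdcb, Ec1, Ec2 in Eb1, Eb2.
  assert (Hr2 : r ^ 2 <> 0) by (apply pow_nonzero; lra).
  unfold rotated_by. rewrite cos_2a, sin_2a.
  split; apply (Rmult_eq_reg_r (r ^ 2)); try exact Hr2; [rewrite Eb1|rewrite Eb2]; ring.
Qed.

Lemma gutkin_tangent_rotation (g1 g2 : R -> R) (alpha : R) (x y : R -> R) :
  smooth g1 -> smooth g2 -> unit_speed g1 g2 -> convex_curve g1 g2 ->
  (forall s, 0 < curvature g1 g2 s) -> gutkin_chords g1 g2 alpha x y ->
  forall t, rotated_by (2 * alpha)
    (Derive g1 (x t)) (Derive g2 (x t)) (Derive g1 (y t)) (Derive g2 (y t)).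
Proof.
  intros S1 S2 Hu Hconv Hk [_ [_ [_ [_ Hchord]]]] t.
  destruct (Hchord t) as [Hne [Hang_x Hang_y]].
  assert (Hdet_x := convex_curve_det_nonneg g1 g2 S1 S2 Hconv Hk (x t) (y t)).
  assert (Hdet_y := convex_curve_det_nonneg g1 g2 S1 S2 Hconv Hk (y t) (x t)).
  set (a1 := Derive g1 (x t)) in *. set (a2 := Derive g2 (x t)) in *.
  set (b1 := Derive g1 (y t)) in *. set (b2 := Derive g2 (y t)) in *.
  set (c1 := g1 (y t) - g1 (x t)) in *. set (c2 := g2 (y t) - g2 (x t)) in *.
  assert (Ha : a1 ^ 2 + a2 ^ 2 = 1) by apply Hu.
  assert (Hb : b1 ^ 2 + b2 ^ 2 = 1) by apply Hu.
  assert (Hc : 0 < c1 ^ 2 + c2 ^ 2).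
  { destruct (Req_dec c1 0) as [e1|e1]; [destruct (Req_dec c2 0) as [e2|e2]|].
    - exfalso. apply Hne. unfold c1, c2 in *. f_equal; lra.
    - assert (0 < c2 ^ 2) by (apply pow2_gt_0; exact e2). nra.
    - assert (0 < c1 ^ 2) by (apply pow2_gt_0; exact e1). nra. }
  assert (Hdet_y' : 0 <= det2 c1 c2 b1 b2)
    by (unfold det2 in *; unfold c1, c2; lra).
  destruct (angle_cos_sin a1 a2 c1 c2) as [Hdot_x Hcross_x]; try lra.
  destruct (angle_cos_sin c1 c2 b1 b2) as [Hdot_y Hcross_y]; try lra.
  rewrite Ha, Hb, sqrt_1, ?Rmult_1_l, ?Rmult_1_r in *.
  rewrite Hang_x in Hdot_x, Hcross_x. rewrite Hang_y in Hdot_y, Hcross_y.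
  apply (rotated_twice a1 a2 b1 b2 c1 c2 (sqrt (c1 ^ 2 + c2 ^ 2))); try assumption.
  - apply sqrt_lt_R0; lra.
  - rewrite pow2_sqrt; lra.
Qed.

Lemma is_derive_Derive_comp (g x : R -> R) (t : R) :
  smooth g -> ex_derive x t ->
  is_derive (fun u => Derive g (x u)) t (Derive x t * Derive_n g 2 (x t)).
Proof.
  intros Hg Hx. apply (is_derive_comp (Derive g) x t).
  - apply is_derive_Derive_smooth, Hg.
  - apply Derive_correct, Hx.
Qed.

Lemma Derive_rotated_Derive_comp (g1 g2 x : R -> R) (theta t : R) :
  smooth g1 -> smooth g2 -> ex_derive x t ->
  rotated_by theta (Derive x t * Derive_n g1 2 (x t)) (Derive x t * Derive_n g2 2 (x t))
    (Derive (fun u => cos theta * Derive g1 (x u) - sin theta * Derive g2 (x u)) t)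
    (Derive (fun u => sin theta * Derive g1 (x u) + cos theta * Derive g2 (x u)) t).
Proof.
  intros S1 S2 Hx.
  assert (D1 := is_derive_Derive_comp g1 x t S1 Hx).
  assert (D2 := is_derive_Derive_comp g2 x t S2 Hx).
  split; apply is_derive_unique.
  - exact (is_derive_minus _ _ t _ _ (is_derive_scal _ _ _ _ D1) (is_derive_scal _ _ _ _ D2)).
  - exact (is_derive_plus _ _ t _ _ (is_derive_scal _ _ _ _ D1) (is_derive_scal _ _ _ _ D2)).
Qed.

(* Differentiating T(y t) = R_theta T(x t): the rotation commutes with d/dt and
   preserves det2, and curvature is det2 (T, T'). *)
Lemma curvature_Derive_rotated_tangents (g1 g2 x y : R -> R) (theta : R) :
  smooth g1 -> smooth g2 ->
  (forall t, ex_derive x t) -> (forall t, ex_derive y t) ->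
  (forall t, rotated_by theta
     (Derive g1 (x t)) (Derive g2 (x t)) (Derive g1 (y t)) (Derive g2 (y t))) ->
  forall t, curvature g1 g2 (x t) * Derive x t = curvature g1 g2 (y t) * Derive y t.
Proof.
  intros S1 S2 Hx Hy Hrot t.
  destruct (Derive_rotated_Derive_comp g1 g2 x theta t S1 S2 (Hx t)) as [Hd1 Hd2].
  assert (Hy1 : Derive y t * Derive_n g1 2 (y t) =
                Derive (fun u => cos theta * Derive g1 (x u) - sin theta * Derive g2 (x u)) t).
  { rewrite <- (is_derive_unique _ _ _ (is_derive_Derive_comp g1 y t S1 (Hy t))).
    apply Derive_ext. intros u. apply Hrot. }
  assert (Hy2 : Derive y t * Derive_n g2 2 (y t) =
                Derive (fun u => sin theta * Derive g1 (x u) + cos theta * Derive g2 (x u)) t).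
  { rewrite <- (is_derive_unique _ _ _ (is_derive_Derive_comp g2 y t S2 (Hy t))).
    apply Derive_ext. intros u. apply Hrot. }
  destruct (Hrot t) as [Hr1 Hr2].
  assert (Hpyth := sin2_cos2 theta). unfold Rsqr in Hpyth.
  unfold curvature.
  transitivity (Derive g1 (y t) * (Derive y t * Derive_n g2 2 (y t))
              - Derive g2 (y t) * (Derive y t * Derive_n g1 2 (y t))); [|ring].
  rewrite Hy1, Hy2, Hd1, Hd2, Hr1, Hr2.
  transitivity ((sin theta * sin theta + cos theta * cos theta) *
    ((Derive g1 (x t) * Derive_n g2 2 (x t) - Derive g2 (x t) * Derive_n g1 2 (x t))
     * Derive x t)); [rewrite Hpyth; ring|ring].
Qed.

Theorem mainTheorem3 (g1 g2 : R -> R) (L alpha : R) (x y : R -> R) :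
  smooth g1 -> smooth g2 ->
  unit_speed g1 g2 ->
  closed_simple g1 g2 L ->
  convex_curve g1 g2 ->
  (forall s, 0 < curvature g1 g2 s) ->
  0 < alpha <= PI ->
  gutkin_chords g1 g2 alpha x y ->
  (forall t, curvature g1 g2 (x t) * Derive x t = curvature g1 g2 (y t) * Derive y t) /\
  (forall a : R,
     (forall t, Derive x t = a / curvature g1 g2 (x t)) ->
     forall t, Derive y t = a / curvature g1 g2 (y t)).
Proof.
  intros S1 S2 Hu _ Hconv Hk _ Hgut.
  assert (Hkx : forall t,
    curvature g1 g2 (x t) * Derive x t = curvature g1 g2 (y t) * Derive y t).
  { pose proof Hgut as [Hx [Hy _]].
    apply (curvature_Derive_rotated_tangents g1 g2 x y (2 * alpha) S1 S2).
    - apply Hx.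
    - apply Hy.
    - exact (gutkin_tangent_rotation g1 g2 alpha x y S1 S2 Hu Hconv Hk Hgut). }
  split; [exact Hkx|].
  intros a Hxa t.
  assert (Hky_pos := Hk (y t)). assert (Hkx_pos := Hk (x t)).
  specialize (Hkx t). rewrite Hxa in Hkx.
  apply (Rmult_eq_reg_l (curvature g1 g2 (y t))); [|lra].
  rewrite <- Hkx. field. lra.
Qed.
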